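(* Let $\{\mathcal{A}_i\}_{i\in I}$ be $*$-subalgebras of a noncommutative probability space $(\mathcal{A},\phi)$ which are $m$-monotone w.r.t. $\phi$, with $m$-monotone family of units $\{1_i\}$. Then $$\phi(a_1\cdots a_{j-1}1_{i_j}a_{j+1}\cdots a_n)=\phi(a_1\cdots a_{j-1}a_{j+1}\cdots a_n)$$ whenever $j\in\{1,\dots,r\}$ and $i_1\ne\cdots\ne i_m<i_{m+1}<\cdots<i_r>i_{r+1}$, where $a_k\in\mathcal{A}_{i_k}$ (arbitrary, not necessarily centered) for $k\ne j$.
   Context: $(\mathcal{A},\phi)$: unital $*$-algebra with a state; $I$ linearly ordered. $\{1_i\}_{i\in I}$, $1_i\in\mathcal{A}_i$ projections that are units of $\mathcal{A}_i$, is an $m$-monotone family of units w.r.t. $\phi$ if $\phi(1_i)=1$ and for all $n$, $1\le j\le n$, indices $i_1,\dots,i_n$, $a_k\in\mathcal{A}_{i_k}\cap\mathrm{Ker}\,\phi$ ($k<j$), $a_k\in\mathcal{A}_{i_k}$ ($k>j$): $\phi(a_1\cdots a_{j-1}1_{i_j}a_{j+1}\cdots a_n)=\phi(a_1\cdots a_{j-1}a_{j+1}\cdots a_n)$ if $j\le m$ or $m<j\le r$ for some $r$ with $i_1\ne\cdots\ne i_m<i_{m+1}<\cdots<i_r>i_{r+1}$, and $=0$ otherwise. $\{\mathcal{A}_i\}$ are $m$-monotone w.r.t. $\phi$ if such a family exists and $\phi(a_1\cdots a_n)=0$ whenever $a_k\in\mathcal{A}_{i_k}\cap\mathrm{Ker}\,\phi$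 and $i_1\ne i_2\ne\cdots\ne i_n$. *)

From HB Require Import structures.
From mathcomp Require Import all_boot all_order all_algebra.
From mathcomp Require Import complex.
From mathcomp Require Import reals.
Set Implicit Arguments. Unset Strict Implicit. Unset Printing Implicit Defensive.
Import Order.TTheory GRing.Theory Num.Theory.
Local Open Scope ring_scope.

(* Scalars: a numeric closed field C (instantiated with C = R[i], R : realType,
   i.e. the complex numbers, in the statement).  Num.conj is complex conjugation. *)

Section Defs.
Variable C : numClosedFieldType.
Variable A : algType C.

Record is_star_algebra (star : A -> A) : Prop := {
  star_invol : forall a, star (star a) = a;
  star_add : forall a b, star (a + b) = star a + star b;
  star_scale : forall (c : C) a, star (c *: a) = Num.conj c *: star a;
  star_mul : forall a b, star (a * b) = star b * star a
}.

Record is_state (star : A -> A) (phi : A -> C) : Prop := {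
  state_add : forall a b, phi (a + b) = phi a + phi b;
  state_scale : forall (c : C) a, phi (c *: a) = c * phi a;
  state_unit : phi 1 = 1;
  state_pos : forall a, 0 <= phi (star a * a)
}.

(* S is a *-subalgebra (not necessarily containing the unit of A). *)
Record is_star_subalgebra (star : A -> A) (S : {pred A}) : Prop := {
  sub0 : 0 \in S;
  subD : forall a b, a \in S -> b \in S -> a + b \in S;
  subZ : forall (c : C) a, a \in S -> c *: a \in S;
  subM : forall a b, a \in S -> b \in S -> a * b \in S;
  subS : forall a, a \in S -> star a \in S
}.

Definition word (a : nat -> A) (n : nat) : A := \prod_(1 <= k < n.+1) a k.

Definition word_at (a : nat -> A) (n j : nat) (u : A) : A :=
  \prod_(1 <= k < n.+1) (if k == j then u else a k).

Definition word_omit (a : nat -> A) (n j : nat) : A :=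
  \prod_(1 <= k < n.+1 | k != j) a k.
End Defs.

Section Indices.
Variables (d : Order.disp_t) (I : orderType d).

Definition alternating (idx : nat -> I) (n : nat) : Prop :=
  forall k, (1 <= k)%N -> (k < n)%N -> idx k != idx k.+1.

Definition mpattern (idx : nat -> I) (m r n : nat) : Prop :=
  [/\ forall k, (1 <= k)%N -> (k < m)%N -> idx k != idx k.+1,
      forall k, (1 <= k)%N -> (m <= k)%N -> (k < r)%N -> (idx k < idx k.+1)%O
    & (r < n)%N -> (idx r.+1 < idx r)%O].
End Indices.

Section Monotone.
Variables (C : numClosedFieldType) (A : algType C).
Variables (d : Order.disp_t) (I : orderType d).

Definition mmonotone_units (star : A -> A) (phi : A -> C) (A_ : I -> {pred A})
    (one_ : I -> A) (m : nat) : Prop :=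
  (forall i, [/\ one_ i \in A_ i, one_ i * one_ i = one_ i, star (one_ i) = one_ i,
     (forall a, a \in A_ i -> one_ i * a = a /\ a * one_ i = a) & phi (one_ i) = 1])
  /\
  (forall (n j : nat) (idx : nat -> I) (a : nat -> A),
     (1 <= j)%N -> (j <= n)%N -> alternating idx n ->
     (forall k, (1 <= k)%N -> (k < j)%N -> a k \in A_ (idx k) /\ phi (a k) = 0) ->
     (forall k, (j < k)%N -> (k <= n)%N -> a k \in A_ (idx k)) ->
     let cond := (j <= m)%N \/
                 exists r, [/\ (m < j)%N, (j <= r)%N, (r <= n)%N & mpattern idx m r n] in
     (cond -> phi (word_at a n j (one_ (idx j))) = phi (word_omit a n j)) /\
     (~ cond -> phi (word_at a n j (one_ (idx j))) = 0)).

Definition mmonotone (star : A -> A) (phi : A -> C) (A_ : I -> {pred A}) (m : nat) : Prop :=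
  (exists one_ : I -> A, mmonotone_units star phi A_ one_ m) /\
  (forall (n : nat) (idx : nat -> I) (a : nat -> A),
     (1 <= n)%N -> alternating idx n ->
     (forall k, (1 <= k)%N -> (k <= n)%N -> a k \in A_ (idx k) /\ phi (a k) = 0) ->
     phi (word a n) = 0).
End Monotone.

From HB Require Import structures.
From mathcomp Require Import all_boot all_order all_algebra.
From mathcomp Require Import complex.
From mathcomp Require Import reals.
From mathcomp Require Import zify.
Set Implicit Arguments. Unset Strict Implicit. Unset Printing Implicit Defensive.
Import Order.TTheory GRing.Theory Num.Theory.
Local Open Scope ring_scope.

(* Write the word as p 1_i q with p = a_1 ... a_(j-1) and argue by strong
   induction on the length of p q.  Adjacent letters of q from the same
   algebra can be multiplied together, and a first letter of q from A_i
   absorbs 1_i, so q may be assumed to continue the alternation of p 1_i.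
   The letters x of p are then centered from left to right,
   x = (x - phi(x) 1_k) + phi(x) 1_k: the centered part is carried along,
   while the unit 1_k stands after a centered prefix, where the defining
   property of the units deletes it; what remains is a shorter word (after
   possibly merging the two letters that became adjacent), handled by the
   induction.  Once p is centered, the defining property deletes 1_i itself,
   taking for r the end of the maximal increasing run of indices from j. *)

Lemma subseq_drop_cat_cons (T : eqType) n (s1 s2 : seq T) x :
  subseq (drop n (s1 ++ s2)) (drop n (s1 ++ x :: s2)).
Proof.
elim: s1 n => [|y s1 IHs1] [|n] /=; rewrite ?drop0.
- exact: subseq_cons.
- by rewrite -add1n -drop_drop drop_subseq.
- by rewrite eqxx cat_subseq ?subseq_cons.
- exact: IHs1.
Qed.

Lemma sorted_map_iotaP (T : Type) (e : rel T) (f : nat -> T) lo n :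
  reflect (forall k, (lo <= k)%N -> (k.+1 < lo + n)%N -> e (f k) (f k.+1))
          (sorted e (map f (iota lo n))).
Proof.
have nth_f k : (k < n)%N -> nth (f lo) (map f (iota lo n)) k = f (lo + k)%N.
  by move=> lt_k_n; rewrite (nth_map 0%N) ?nth_iota ?size_iota.
apply: (iffP (sortedP (f lo))); rewrite size_map size_iota => ek k.
  move=> le_lo_k lt_k_n; have := ek (k - lo)%N.
  by rewrite !nth_f ?addnS ?subnKC //; [apply | ..]; lia.
by move=> lt_k_n; rewrite !nth_f ?addnS; [apply: ek | ..]; lia.
Qed.

Lemma alternating_or_repeat (S : eqType) (T : Type) (i : S) (q : seq (S * T)) :
  [\/ path (fun x y => x != y) i (map fst q),
      exists y q', q = (i, y) :: q'
    | exists q1 h x y q2, q = q1 ++ [:: (h, x), (h, y) & q2]].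
Proof.
elim: q i => [|[h x] q IHq] i /=; first by constructor 1.
have [->|neq_hi] := eqVneq h i; first by constructor 2; exists x, q.
case: (IHq h) => [alt | [y [q' ->]] | [q1 [h' [x' [y' [q2 ->]]]]]].
- by constructor 1; apply/andP; split; rewrite 1?eq_sym.
- by constructor 3; exists [::], h, x, y, q'.
- by constructor 3; exists ((h, x) :: q1), h', x', y', q2.
Qed.

Section Indices.
Variables (d : Order.disp_t) (I : orderType d).

Definition alternating_seq (l : seq I) : bool := sorted (fun x y => x != y) l.

Lemma alternating_iotaP (idx : nat -> I) n :
  reflect (alternating idx n) (alternating_seq (map idx (iota 1 n))).
Proof.
by apply: (iffP (sorted_map_iotaP _ _ _ _)) => alt k *; apply: alt; lia.
Qed.

Variable m : nat.

(* [l = [:: i_1; ...; i_s]] satisfies [i_1 <> ... <> i_m < i_(m+1) < ... < i_s]. *)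
Definition mrising (l : seq I) : bool :=
  alternating_seq l && sorted <%O (drop m.-1 l).

Lemma mrising_iotaP (idx : nat -> I) j :
  reflect (alternating idx j /\
           forall k, (0 < k)%N -> (m <= k)%N -> (k < j)%N -> (idx k < idx k.+1)%O)
          (mrising (map idx (iota 1 j))).
Proof.
rewrite /mrising -map_drop drop_iota.
apply: (iffP andP) => [[/alternating_iotaP alt /sorted_map_iotaP incr] | [alt incr]].
  by split=> // k *; apply: incr; lia.
by split; [apply/alternating_iotaP | apply/sorted_map_iotaP => k *; apply: incr; lia].
Qed.

Lemma mrising_catl l1 l2 : mrising (l1 ++ l2) -> mrising l1.
Proof.
case/andP=> /cat_sorted2[alt _] incr; apply/andP; split=> //.
move: incr; rewrite drop_cat; case: ltnP => [_ | le_l1_m]; first by case/cat_sorted2.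
by rewrite (drop_oversize le_l1_m).
Qed.

Lemma mrising_remove l1 x l2 : mrising (l1 ++ x :: l2) ->
  mrising (l1 ++ l2) \/
  exists l1' h l2', [/\ l1 = rcons l1' h, l2 = h :: l2' & mrising (l1' ++ h :: l2')].
Proof.
rewrite /mrising /alternating_seq => /andP[alt incr].
have incr12 := subseq_sorted lt_trans (subseq_drop_cat_cons _ _ _ _) incr.
case/lastP: l1 => [|l1 h1] in alt incr incr12 *.
  by left; rewrite incr12 andbT; apply: path_sorted alt.
case: l2 => [|h2 l2] in alt incr incr12 *.
  by left; rewrite incr12 cats0 andbT; case/cat_sorted2: alt.
have [eq_h | neq_h] := eqVneq h1 h2.
  right; exists l1, h1, l2; split; rewrite -?eq_h //.
  rewrite -eq_h in alt incr12.
  have := subseq_sorted lt_trans (subseq_drop_cat_cons _ _ _ _) incr12.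
  rewrite cat_rcons => ->; rewrite andbT.
  by move: alt; rewrite cat_rcons !sorted_cat_cons /= => /andP[-> /and3P[_ _ ->]].
left; rewrite incr12 andbT.
by move: alt; rewrite !cat_rcons !sorted_cat_cons /= neq_h => /andP[-> /and3P[_ _ ->]].
Qed.

Lemma mpattern_maximal_run (idx : nat -> I) n j :
  alternating idx n -> (m < j <= n)%N ->
  (forall k, (0 < k)%N -> (m <= k)%N -> (k < j)%N -> (idx k < idx k.+1)%O) ->
  exists2 r, (j <= r <= n)%N & mpattern idx m r n.
Proof.
move=> alt; move: {2}(n - j)%N (leqnn (n - j)) => e.
elim: e j => [|e IHe] j le_nj_e lt_mj_n incr.
  exists j; first lia.
  by split=> [k * | k * | ?]; [apply: alt | apply: incr | ]; lia.
have [lt_jn | le_nj] := ltnP j n; last first.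
  exists j; first lia.
  by split=> [k * | k * | ?]; [apply: alt | apply: incr | ]; lia.
case: (ltgtP (idx j) (idx j.+1)) => [up | down | eq_idx].
- have [|||r le_jr pat] := IHe j.+1; [lia | lia | | by exists r; first lia].
  move=> k k_gt0 le_mk lt_kj1; have [lt_kj | le_jk] := ltnP k j; first exact: incr.
  by have -> : k = j by lia.
- by exists j; [lia | split=> [k * | k * | //]; [apply: alt | apply: incr]; lia].
- by have := alt j; rewrite eq_idx eqxx; lia.
Qed.

Lemma mpattern_mrising (idx : nat -> I) r n j :
  (j <= r)%N -> mpattern idx m r n -> mrising (map idx (iota 1 j)).
Proof.
move=> le_jr [alt incr _]; apply/mrising_iotaP; split=> [k k_gt0 lt_kj | k *].
  by have [lt_km | le_mk] := ltnP k m; [apply: alt | rewrite lt_eqF ?incr]; lia.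
by apply: incr; lia.
Qed.

End Indices.

Section WordProducts.
Variables (C : numClosedFieldType) (A : algType C).

Lemma word_omitE (a : nat -> A) n j : word_omit a n j = word_at a n j 1.
Proof. by rewrite /word_omit big_mkcond; apply: eq_bigr => k _; case: (k == j). Qed.

Lemma word_at_split (a : nat -> A) n j u : (0 < j <= n)%N ->
  word_at a n j u = \prod_(1 <= k < j) a k * u * \prod_(j.+1 <= k < n.+1) a k.
Proof.
move=> j_bounds; rewrite /word_at (big_cat_nat (n := j)) ?(big_ltn (m := j)) /=; try lia.
rewrite eqxx mulrA; congr (_ * _ * _); apply: eq_big_nat => k k_bounds.
  by rewrite ifN //; apply/eqP; lia.
by rewrite ifN //; apply/eqP; lia.
Qed.

Variable I : Type.

(* A word a_1 ... a_n with a_k in A_(i_k) is the list of the pairs (i_k, a_k). *)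
Definition wprod (w : seq (I * A)) : A := \prod_(x <- w) x.2.

Lemma wprod_cat w1 w2 : wprod (w1 ++ w2) = wprod w1 * wprod w2.
Proof. exact: big_cat. Qed.

Lemma wprod_cons x w : wprod (x :: w) = x.2 * wprod w.
Proof. exact: big_cons. Qed.

Lemma wprod_rcons w x : wprod (rcons w x) = wprod w * x.2.
Proof. exact: big_rcons. Qed.

Lemma wprod_merge w1 h x y w2 :
  wprod (w1 ++ [:: (h, x), (h, y) & w2]) = wprod (w1 ++ (h, x * y) :: w2).
Proof. by rewrite !wprod_cat !wprod_cons /= !mulrA. Qed.

Lemma prod_nth_iota (w : seq (I * A)) x0 lo n : (lo + n <= size w)%N ->
  \prod_(lo <= k < lo + n) (nth x0 w k).2 = wprod (take n (drop lo w)).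
Proof.
by move=> le_size; rewrite /wprod /index_iota addKn -(map_nth_iota x0) ?big_map //; lia.
Qed.

(* The dummy head [x0] puts letter k of the word at position k, as in [word_at]. *)
Lemma word_at_nth x0 w1 i v w2 u :
  word_at (fun k => (nth x0 (x0 :: w1 ++ (i, v) :: w2) k).2)
          (size w1 + (size w2).+1) (size w1).+1 u = wprod w1 * u * wprod w2.
Proof.
rewrite word_at_split; last lia.
rewrite -add1n prod_nth_iota /=; last by rewrite size_cat /=; lia.
have -> : (size w1 + (size w2).+1).+1 = ((size w1).+2 + size w2)%N by lia.
rewrite prod_nth_iota /=; last by rewrite size_cat /=; lia.
by rewrite drop0 take_size_cat // drop_cat ltnNge leqnSn subSnn /= drop0 take_size.
Qed.

End WordProducts.

Section UnitCancellation.
Variables (C : numClosedFieldType) (A : algType C) (star : A -> A) (phi : A -> C).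
Variables (d : Order.disp_t) (I : orderType d) (A_ : I -> {pred A}) (one_ : I -> A).
Variable m : nat.
Hypothesis state_phi : is_state star phi.
Hypothesis subalg : forall i, is_star_subalgebra star (A_ i).
Hypothesis units : mmonotone_units star phi A_ one_ m.

Lemma unit_in i : one_ i \in A_ i.
Proof. by have [/(_ i)[]] := units. Qed.

Lemma unit_mul i x : x \in A_ i -> one_ i * x = x.
Proof. by move=> x_in; have [/(_ i)[_ _ _ /(_ x x_in)[]]] := units. Qed.

Lemma mul_unit i x : x \in A_ i -> x * one_ i = x.
Proof. by move=> x_in; have [/(_ i)[_ _ _ /(_ x x_in)[]]] := units. Qed.

Lemma phi_unit i : phi (one_ i) = 1.
Proof. by have [/(_ i)[]] := units. Qed.

Definition center i x := x - phi x *: one_ i.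

Lemma center_in i x : x \in A_ i -> center i x \in A_ i.
Proof.
have [_ addS scaleS _ _] := subalg i => x_in.
by rewrite /center -scaleN1r scalerA addS ?scaleS ?unit_in.
Qed.

Lemma phi_center i x : phi (center i x) = 0.
Proof.
have [addphi scalephi _ _] := state_phi.
by rewrite /center -scaleN1r scalerA addphi scalephi phi_unit mulr1 mulN1r subrr.
Qed.

Lemma phi_center_split i u x v :
  phi (u * (x * v)) = phi (u * (center i x * v)) + phi x * phi (u * (one_ i * v)).
Proof.
have [addphi scalephi _ _] := state_phi.
rewrite -scalephi -addphi; congr phi.
by rewrite /center mulrBl mulrBr -scalerAl -scalerAr addrNK.
Qed.

Definition well_placed (w : seq (I * A)) : bool := all (fun x => x.2 \in A_ x.1) w.
Definition centered (w : seq (I * A)) : bool := all (fun x => phi x.2 == 0) w.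

Definition unit_cancels (p : seq (I * A)) i (q : seq (I * A)) : Prop :=
  phi (wprod p * one_ i * wprod q) = phi (wprod p * wprod q).

Lemma unit_cancels_centered p i q :
  well_placed (p ++ q) -> centered p ->
  alternating_seq (map fst p ++ i :: map fst q) -> mrising m (map fst p ++ [:: i]) ->
  unit_cancels p i q.
Proof.
move=> placed_pq cen alt rising.
pose x0 := (i, 0 : A); pose w := p ++ (i, one_ i) :: q.
pose idx k := (nth x0 (x0 :: w) k).1; pose a k := (nth x0 (x0 :: w) k).2.
have size_w : size w = (size p + (size q).+1)%N by rewrite size_cat.
have idx_iota l : (l <= size w)%N -> map idx (iota 1 l) = map fst (take l w).
  move=> le_lw; have -> : take l w = take l (drop 1 (x0 :: w)) by rewrite /= drop0.
  by rewrite -(map_nth_iota x0) -?map_comp //=; lia.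
have placed : well_placed w.
  by move: placed_pq; rewrite /well_placed !all_cat /= unit_in => /andP[-> ->].
have alt_idx : alternating idx (size w).
  by apply/alternating_iotaP; rewrite idx_iota // take_size map_cat.
have /mrising_iotaP[_ incr] : mrising m (map idx (iota 1 (size p).+1)).
  rewrite idx_iota ?size_w; last lia.
  by rewrite take_cat ltnNge leqnSn subSnn /= take0 map_cat.
have placed_p : well_placed p by move: placed_pq; rewrite /well_placed all_cat => /andP[].
have prefix k : (0 < k)%N -> (k < (size p).+1)%N -> a k \in A_ (idx k) /\ phi (a k) = 0.
  case: k => // k _; rewrite ltnS => lt_kp; rewrite /a /idx /= nth_cat lt_kp.
  by split; [apply: (all_nthP x0 placed_p) | apply/eqP; apply: (all_nthP x0 cen)].
have suffix k : ((size p).+1 < k)%N -> (k <= size w)%N -> a k \in A_ (idx k).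
  by case: k => // k _ lt_kw; apply: (all_nthP x0 placed).
have [_ /(_ (size w) (size p).+1 idx a isT) units_ax] := units.
have [cancel _] := units_ax ltac:(lia) alt_idx prefix suffix.
have idx_i : idx (size p).+1 = i by rewrite /idx /= nth_cat ltnn subnn.
move: cancel; rewrite idx_i word_omitE size_w /a word_at_nth word_at_nth mulr1; apply.
have [le_jm | lt_mj] := leqP (size p).+1 m; [by left | right].
have [|r le_jrn pat] := mpattern_maximal_run alt_idx _ incr; first lia.
by rewrite size_w in le_jrn pat; exists r; split=> //; lia.
Qed.

Lemma well_placed_cat w1 w2 : well_placed (w1 ++ w2) = well_placed w1 && well_placed w2.
Proof. exact: all_cat. Qed.

Lemma well_placed_cons x w : well_placed (x :: w) = (x.2 \in A_ x.1) && well_placed w.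
Proof. by []. Qed.

Lemma well_placed_merge w1 h x y w2 :
  well_placed (w1 ++ [:: (h, x), (h, y) & w2]) -> well_placed (w1 ++ (h, x * y) :: w2).
Proof.
have [_ _ _ mulS _] := subalg h.
by rewrite !well_placed_cat /= => /and4P[-> x_in y_in ->]; rewrite mulS.
Qed.

Section Induction.
Variable N : nat.
Hypothesis IH : forall p i q, (size p + size q < N)%N -> well_placed (p ++ q) ->
  mrising m (map fst p ++ [:: i]) -> unit_cancels p i q.

Lemma unit_cancels_after_removal pc k pa i q :
  (size pc + size pa + size q < N)%N -> well_placed (pc ++ pa ++ q) ->
  mrising m (map fst pc ++ k :: map fst pa ++ [:: i]) -> unit_cancels (pc ++ pa) i q.
Proof.
move=> small placed /mrising_remove[rising | [l1 [h [l2 [eq_l1 eq_l2 rising]]]]].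
  by apply: IH; rewrite ?catA ?map_cat -?catA ?size_cat.
case/lastP: pc => [|pc [h' y]] in small placed eq_l1 *.
  by move/(congr1 size): eq_l1; rewrite size_rcons.
rewrite map_rcons in eq_l1; case/rcons_inj: eq_l1 => eq_pc eq_h; subst l1 h.
case: pa => [|[h2 z] pa] /= in small placed eq_l2 *.
  case: eq_l2 => eq_i _; subst h'.
  move: placed; rewrite well_placed_cat /well_placed all_rcons /= => /andP[/andP[y_in _] _].
  by rewrite /unit_cancels cats0 wprod_rcons -(mulrA _ y) mul_unit.
case: eq_l2 => eq_h eq_l2; subst h'; rewrite /unit_cancels cat_rcons wprod_merge; apply: IH.
- by rewrite !size_cat size_rcons /= in small *; lia.
- by rewrite -catA; apply: well_placed_merge; rewrite -cat_rcons.
- by rewrite map_cat -catA /= eq_l2.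
Qed.

Lemma unit_cancels_centered_prefix pa pc i q :
  (size pc + size pa + size q <= N)%N -> well_placed (pc ++ pa ++ q) -> centered pc ->
  alternating_seq (map fst (pc ++ pa) ++ i :: map fst q) ->
  mrising m (map fst (pc ++ pa) ++ [:: i]) ->
  unit_cancels (pc ++ pa) i q.
Proof.
elim: pa pc => [|[k x] pa IHpa] pc size_le placed cen alt rising.
  by rewrite cats0 in alt rising *; apply: unit_cancels_centered.
rewrite /= in size_le; move: (placed); rewrite well_placed_cat well_placed_cons well_placed_cat.
case/and4P=> placed_pc x_in placed_pa placed_q.
have placed_short : well_placed (pc ++ pa ++ q) by rewrite !well_placed_cat placed_pc placed_pa.
rewrite map_cat -catA /= in alt; rewrite map_cat -catA /= in rising.
have rising_k : mrising m (map fst pc ++ [:: k]).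
  by apply: (mrising_catl (l2 := map fst pa ++ [:: i])); rewrite -catA.
have cancel_k1 : unit_cancels pc k (pa ++ (i, one_ i) :: q).
  apply: unit_cancels_centered => //; last by rewrite map_cat.
  by rewrite !well_placed_cat well_placed_cons placed_pc placed_pa placed_q unit_in.
have cancel_i : unit_cancels (pc ++ pa) i q.
  by apply: (unit_cancels_after_removal (k := k)) => //; lia.
have cancel_k2 : unit_cancels pc k (pa ++ q) by apply: IH; rewrite ?size_cat; lia.
have cancel_center : unit_cancels (rcons pc (k, center k x) ++ pa) i q.
  apply: IHpa; rewrite ?size_rcons ?cat_rcons ?map_cat -?catA //; first lia.
    rewrite well_placed_cat well_placed_cons well_placed_cat.
    by rewrite placed_pc placed_pa placed_q center_in.
  by rewrite /centered all_rcons /= phi_center eqxx.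
move: cancel_k1 cancel_i cancel_k2 cancel_center.
rewrite /unit_cancels cat_rcons !wprod_cat !wprod_cons /= -!mulrA.
move=> cancel_k1 cancel_i cancel_k2 cancel_center.
by rewrite !(phi_center_split k (wprod pc) x) cancel_center cancel_k1 cancel_i cancel_k2.
Qed.

Lemma unit_cancels_step p i q :
  (size p + size q <= N)%N -> well_placed (p ++ q) -> mrising m (map fst p ++ [:: i]) ->
  unit_cancels p i q.
Proof.
move=> size_le placed rising.
case: (alternating_or_repeat i q) => [alt | [y [q' eq_q]] | [q1 [h [x [y [q2 eq_q]]]]]].
- apply: (unit_cancels_centered_prefix (pc := [::])) => //.
  rewrite /alternating_seq sorted_cat_cons -cats1 alt andbT.
  by case/andP: rising.
- move: placed; rewrite eq_q well_placed_cat well_placed_cons => /and3P[_ y_in _].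
  by rewrite /unit_cancels wprod_cons /= -!mulrA (mulrA (one_ i)) unit_mul.
- rewrite eq_q /unit_cancels wprod_merge; apply: IH.
  + by rewrite eq_q !size_cat /= in size_le *; lia.
  + by rewrite catA well_placed_merge // -catA -eq_q.
  + exact: rising.
Qed.

End Induction.

Lemma unit_cancels_mrising p i q :
  well_placed (p ++ q) -> mrising m (map fst p ++ [:: i]) -> unit_cancels p i q.
Proof.
move: {2}(size p + size q)%N (leqnn (size p + size q)) => N.
elim: N p i q => [|N IHN] p i q size_le.
  by apply: (unit_cancels_step (N := 0)) => // *; lia.
by apply: (unit_cancels_step (N := N.+1)) => // p' i' q' *; apply: IHN; lia.
Qed.

End UnitCancellation.

Theorem lemma3p5 (R : realType) (A : algType R[i]) (star : A -> A) (phi : A -> R[i])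
    (d : Order.disp_t) (I : orderType d) (A_ : I -> {pred A}) (one_ : I -> A) (m : nat) :
  is_star_algebra star ->
  is_state star phi ->
  (forall i, is_star_subalgebra star (A_ i)) ->
  mmonotone star phi A_ m ->
  mmonotone_units star phi A_ one_ m ->
  forall (n j r : nat) (idx : nat -> I) (a : nat -> A),
    (1 <= j)%N -> (j <= r)%N -> (m <= r)%N -> (r <= n)%N ->
    mpattern idx m r n ->
    (forall k, (1 <= k)%N -> (k <= n)%N -> k != j -> a k \in A_ (idx k)) ->
    phi (word_at a n j (one_ (idx j))) = phi (word_omit a n j).
Proof.
move=> _ state_phi subalg _ units n j r idx a j_gt0 le_jr _ le_rn pat placed.
pose word_of lo len := [seq (idx k, a k) | k <- iota lo len].
have wprod_word lo hi : wprod (word_of lo (hi - lo)%N) = \prod_(lo <= k < hi) a k.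
  by rewrite /wprod big_map.
rewrite word_omitE !word_at_split ?mulr1; try lia.
rewrite -(wprod_word 1%N j) -(wprod_word j.+1 n.+1).
apply: (unit_cancels_mrising state_phi subalg units).
  rewrite /well_placed all_cat; apply/andP; split; apply/allP=> x /mapP[k];
    rewrite mem_iota => k_bounds ->; apply: placed; try lia; apply/eqP; lia.
have iota_j : iota 1 j = rcons (iota 1 (j - 1)) j.
  by rewrite -cats1 -{1}(subnK j_gt0) iotaD /= add1n subn1 prednK.
by rewrite -map_comp cats1 -map_rcons -iota_j (mpattern_mrising _ pat).
Qed.
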